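(* Let $\gamma>0$ and let $\mathbf a$ be given by $a_0=0$ and $a_i=i^{-\gamma}$ for $i\ge 1$. Then $f^{\mathbf a}$ satisfies the density axiom, and $f^{\mathbf a}$ satisfies the size axiom if and only if $\gamma\le 1$.
   Context: Graphs are finite directed graphs; $d_G(x,y)$ is the shortest directed path length from $x$ to $y$ ($\infty$ if none). For $\mathbf a\in\mathbb{R}^{\mathbb{N}}$ the linear centrality is $f^{\mathbf a}_G(i)=\sum_{k\ge 0}|\{j: d_G(j,i)=k\}|\,a_k$ (only finite distances counted). For positive integers $k,p$: a $k$-clique has $k$ nodes with arcs in both directions between every pair of distinct nodes; a directed $p$-cycle has nodes $z_0,\dots,z_{p-1}$ with arcs $z_j\to z_{j+1\bmod p}$. Let $x$ be a clique node and $y$ a cycle node. $S$ is the disjoint union of the $k$-clique and the $p$-cycle; $S_{xy}$ is $S$ plus the arcs $x\to y$ and $y\to x$. Density axiom: for every $k\ge3$ and $p=k$, $f_{S_{xy}}(x)>f_{S_{xy}}(y)$. Size axiom: for every fixed $p$ there is $k_0$ with $f_S(x)>f_S(y)$ for all $k\ge k_0$, and for every fixed $k$ there is $p_0$ with $f_S(x)<f_S(y)$ for all $p\ge p_0$. *)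

From mathcomp Require Import all_boot all_order all_algebra.
From mathcomp Require Import reals exp.
Set Implicit Arguments. Unset Strict Implicit. Unset Printing Implicit Defensive.
Import Order.TTheory GRing.Theory Num.Theory.
Local Open Scope ring_scope.

Fixpoint walk (T : finType) (e : rel T) (n : nat) (u v : T) : bool :=
  match n with
  | 0 => u == v
  | n'.+1 => [exists z, e u z && walk e n' z v]
  end.

Definition is_dist (T : finType) (e : rel T) (k : nat) (u v : T) : bool :=
  walk e k u v && [forall m : 'I_k, ~~ walk e m u v].

(* Linear centrality f^a_G(i) = sum_k |{j : d_G(j,i) = k}| a_k.
   All finite distances are < #|T|, so the series is the finite sum below. *)
Definition lin_cent (R : realType) (a : nat -> R) (T : finType) (e : rel T) (i : T) : R :=
  \sum_(k < #|T|) (#|[set j | is_dist e k j i]|)%:R * a k.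

(* S: disjoint union of the k-clique ('I_k) and the directed p-cycle ('I_p). *)
Definition S_rel (k p : nat) : rel ('I_k + 'I_p)%type :=
  fun u v =>
    match u, v with
    | inl a, inl b => a != b
    | inr a, inr b => (a.+1 %% p == b)%N
    | _, _ => false
    end.

Definition Sxy_rel (k p : nat) (x : 'I_k) (y : 'I_p) : rel ('I_k + 'I_p)%type :=
  fun u v => [|| S_rel u v, (u == inl x) && (v == inr y) | (u == inr y) && (v == inl x)].

Definition centrality (R : realType) := forall T : finType, rel T -> T -> R.

Definition density_axiom (R : realType) (f : centrality R) : Prop :=
  forall (k : nat) (x : 'I_k) (y : 'I_k), (3 <= k)%N ->
    f _ (@Sxy_rel k k x y) (inl x) > f _ (@Sxy_rel k k x y) (inr y).

Definition size_axiom (R : realType) (f : centrality R) : Prop :=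
  (forall p : nat, (0 < p)%N -> exists k0 : nat, forall k : nat, (k0 <= k)%N ->
     forall (x : 'I_k) (y : 'I_p), f _ (@S_rel k p) (inl x) > f _ (@S_rel k p) (inr y))
  /\
  (forall k : nat, (0 < k)%N -> exists p0 : nat, forall p : nat, (p0 <= p)%N ->
     forall (x : 'I_k) (y : 'I_p), f _ (@S_rel k p) (inl x) < f _ (@S_rel k p) (inr y)).

Definition apow (R : realType) (gamma : R) (i : nat) : R :=
  if i == 0%N then 0 else powR (i%:R) (- gamma).

(* In S the
   clique node sees k - 1 nodes at distance 1 and the cycle node sees one
   node at each distance 0, ..., p - 1, so f_S(x) = k - 1 while f_S(y) is the
   partial sum a_0 + ... + a_(p-1) of the p-series; the size axiom therefore
   says exactly that these partial sums are unbounded, which holds iff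
   gamma <= 1 (for gamma > 1 they telescope against n^(1 - gamma)).  In S_xy
   (p = k) the difference f(x) - f(y) collapses to
   (k - 1)(1 - 2^-gamma) + k^-gamma - 1, which is positive by Bernoulli's
   inequality because k^-gamma >= (2^-gamma)^(k-1). *)
From mathcomp Require Import all_boot all_order all_algebra.
From mathcomp Require Import boolp reals exp sequences.
From mathcomp Require Import zify ring lra.
Set Implicit Arguments. Unset Strict Implicit. Unset Printing Implicit Defensive.
Import Order.TTheory GRing.Theory Num.Theory.
Local Open Scope ring_scope.

Section Walks.
Variables (T : finType) (e : rel T).

Lemma walk_cat m n u w v : walk e m u w -> walk e n w v -> walk e (m + n) u v.
Proof.
elim: m u => [|m IH] u /=; first by move/eqP->.
move=> /existsP [z /andP [euz wz]] wv; apply/existsP; exists z.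
by rewrite euz (IH _ wz wv).
Qed.

Lemma sub_walk (e' : rel T) n u v :
  subrel e e' -> walk e n u v -> walk e' n u v.
Proof.
move=> sub; elim: n u => [|n IH] u //= /existsP [z /andP [ez wz]].
by apply/existsP; exists z; rewrite sub // IH.
Qed.

Lemma walk_closed (Q : pred T) m u v :
  (forall u v, e u v -> Q u -> Q v) -> walk e m u v -> Q u -> Q v.
Proof.
move=> cl; elim: m u => [|m IH] u /=; first by move/eqP->.
by move=> /existsP [z /andP [euz wz]] Qu; exact: (IH _ wz (cl _ _ euz Qu)).
Qed.

End Walks.

(* A walk of length [phi j] bounds the distance from [j] to [i] above, and
   since [phi] drops by at most one along each arc it also bounds it below. *)
Section Potential.
Variables (T : finType) (e : rel T) (i : T) (phi : T -> nat) (P : pred T).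
Hypothesis phi_arc : forall u v, e u v -> (phi u <= (phi v).+1)%N.
Hypothesis phi_target : phi i = 0%N.
Hypothesis P_target : P i.
Hypothesis notP_closed : forall u v, e u v -> ~~ P u -> ~~ P v.
Hypothesis walk_phi : forall j, P j -> walk e (phi j) j i.
Hypothesis phi_small : forall j, P j -> (phi j < #|T|)%N.

Lemma potential_le_walk m u : walk e m u i -> (phi u <= m)%N.
Proof.
elim: m u => [|m IH] u /=; first by move/eqP->; rewrite phi_target.
move=> /existsP [z /andP [euz wz]].
by apply: leq_trans (phi_arc euz) _; rewrite ltnS IH.
Qed.

Lemma is_dist_potential j k : P j -> is_dist e k j i = (k == phi j).
Proof.
move=> Pj; rewrite /is_dist; apply/idP/eqP.
  case/andP=> wk /forallP short; apply/eqP.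
  rewrite eqn_leq potential_le_walk // andbT leqNgt; apply/negP => lt.
  by have := short (Ordinal lt); rewrite walk_phi.
move=> ->; rewrite walk_phi //=; apply/forallP => m; apply/negP => wm.
by have := potential_le_walk wm; rewrite leqNgt ltn_ord.
Qed.

Lemma is_dist_outside j k : ~~ P j -> is_dist e k j i = false.
Proof.
move=> Pj; apply/negP => /andP [w _].
by have := walk_closed notP_closed w Pj; rewrite P_target.
Qed.

Lemma lin_cent_potential (R : realType) (a : nat -> R) :
  lin_cent a e i = \sum_(j | P j) a (phi j).
Proof.
rewrite /lin_cent.
transitivity (\sum_(k < #|T|) \sum_j (if is_dist e k j i then a k else 0)).
  apply: eq_bigr => k _; rewrite mulr_natl -sumr_const big_mkcond /=.
  by apply: eq_bigr => j _; rewrite inE.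
rewrite exchange_big /= [RHS]big_mkcond /=; apply: eq_bigr => j _.
have [Pj|Pj] := boolP (P j);
  last by rewrite big1 // => k _; rewrite is_dist_outside.
rewrite (bigD1 (Ordinal (phi_small Pj))) //= is_dist_potential // eqxx.
rewrite big1 ?addr0 // => k /negbTE nk; rewrite is_dist_potential //.
by case: eqP => // ek; case/eqP: nk; apply/val_inj.
Qed.

End Potential.

Definition cycle_dist (p y b : nat) : nat :=
  if (b <= y)%N then (y - b)%N else (y + p - b)%N.

Section CycleDist.
Variables (k p : nat) (y : 'I_p).

Lemma cycle_dist_lt (b : 'I_p) : (cycle_dist p y b < p)%N.
Proof.
by move: (ltn_ord y) (ltn_ord b); rewrite /cycle_dist; case: (leqP b y) => ?; lia.
Qed.

Lemma cycle_dist_id : cycle_dist p y y = 0%N.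
Proof. by rewrite /cycle_dist leqnn subnn. Qed.

Lemma cycle_dist_arc (u v : 'I_p) : (u.+1 %% p)%N = v ->
  (cycle_dist p y u <= (cycle_dist p y v).+1)%N.
Proof.
case: u v => u hu [v hv] /=; rewrite /cycle_dist; move: (ltn_ord y).
have [lt|ge] := ltnP u.+1 p.
  rewrite modn_small // => _ <-.
  by case: (leqP u y) => ?; case: (leqP u.+1 y) => ?; lia.
have -> : u.+1 = p by lia.
by rewrite modnn => _ <-; case: (leqP u y) => ?; rewrite /= ?subn0; lia.
Qed.

Lemma walk_cycle n (b : 'I_p) : ((b + n) %% p)%N = y ->
  walk (@S_rel k p) n (inr b) (inr y).
Proof.
elim: n b => [|n IH] b /=.
  by rewrite addn0 modn_small // => eby; apply/eqP; congr inr; apply: val_inj.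
have p_gt0 : (0 < p)%N by case: (b) => /= m; lia.
move=> bn_y; apply/existsP; exists (inr (Ordinal (ltn_pmod b.+1 p_gt0))).
by rewrite /= eqxx /=; apply: IH => /=; rewrite modnDml -bn_y addSnnS.
Qed.

Lemma walk_cycle_dist (b : 'I_p) :
  walk (@S_rel k p) (cycle_dist p y b) (inr b) (inr y).
Proof.
apply: walk_cycle; rewrite /cycle_dist; case: (leqP b y) => h.
  by rewrite subnKC // modn_small.
rewrite addnBA; last by move: (ltn_ord b) h; lia.
by rewrite addKn modnDr modn_small.
Qed.

Lemma sum_cycle_dist (R : realType) (F : nat -> R) :
  \sum_(b < p) F (cycle_dist p y b) = \sum_(d < p) F d.
Proof.
pose h (b : 'I_p) : 'I_p := Ordinal (cycle_dist_lt b).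
have h_inj : injective h.
  move=> [b1 lt1] [b2 lt2] /(congr1 val) /=; rewrite /cycle_dist.
  move=> eq_dist; apply: val_inj => /=; move: eq_dist (ltn_ord y).
  by case: (leqP b1 y) => ?; case: (leqP b2 y) => ?; lia.
by rewrite [RHS](reindex_inj h_inj).
Qed.

End CycleDist.

Lemma sum_ord_if_eq (R : realType) k (x : 'I_k) (A B : R) :
  \sum_(c < k) (if c == x then A else B) = A + B *+ k.-1.
Proof.
rewrite (bigD1 x) //= eqxx; congr (_ + _).
rewrite (eq_bigr (fun _ => B)); last by move=> i /negbTE ->.
by rewrite sumr_const cardC1 card_ord.
Qed.

Lemma S_sub_Sxy k p (x : 'I_k) (y : 'I_p) : subrel (@S_rel k p) (Sxy_rel x y).
Proof. by move=> u v S_uv; rewrite /Sxy_rel S_uv. Qed.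

Section LinCentInstances.
Variables (R : realType) (a : nat -> R).

Lemma lin_cent_S_clique k p (x : 'I_k) :
  lin_cent a (@S_rel k p) (inl x) = a 0 + a 1 *+ k.-1.
Proof.
pose phi (u : 'I_k + 'I_p) :=
  if u is inl c then (if c == x then 0 else 1)%N else 0%N.
pose P (u : 'I_k + 'I_p) := if u is inl _ then true else false.
rewrite (@lin_cent_potential _ _ _ phi P) //.
- rewrite big_sumType /= [X in _ + X]big1 // addr0 -(sum_ord_if_eq x).
  by apply: eq_bigr => c _; rewrite /phi; case: eqP.
- by move=> [c|c] [d|d] //=; rewrite /phi; case: eqP; case: eqP.
- by rewrite /phi eqxx.
- by move=> [c|c] [d|d].
- move=> [c|c] //= _; rewrite /phi; case: eqP => [->|/eqP ne] //=.
  by apply/existsP; exists (inl x); rewrite /= ne /=.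
- move=> [c|c] //= _; rewrite card_sum !card_ord /phi.
  case: eqP => [_|/eqP ne]; first by move: (ltn_ord x); lia.
  have : nat_of_ord c != x by [].
  by move: (ltn_ord x) (ltn_ord c); lia.
Qed.

Lemma lin_cent_S_cycle k p (y : 'I_p) :
  lin_cent a (@S_rel k p) (inr y) = \sum_(d < p) a d.
Proof.
pose phi (u : 'I_k + 'I_p) := if u is inr c then cycle_dist p y c else 0%N.
pose P (u : 'I_k + 'I_p) := if u is inr _ then true else false.
rewrite (@lin_cent_potential _ _ _ phi P) //.
- by rewrite big_sumType /= big1 ?add0r ?sum_cycle_dist.
- by move=> [c|c] [d|d] //= /eqP; exact: cycle_dist_arc.
- exact: cycle_dist_id.
- by move=> [c|c] [d|d].
- by move=> [c|c] //= _; exact: walk_cycle_dist.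
- move=> [c|c] //= _; rewrite card_sum !card_ord.
  by move: (cycle_dist_lt y c); lia.
Qed.

Lemma lin_cent_Sxy_clique k (x y : 'I_k) :
  lin_cent a (Sxy_rel x y) (inl x) = a 0 + a 1 *+ k.-1 + \sum_(d < k) a d.+1.
Proof.
pose phi (u : 'I_k + 'I_k) :=
  match u with
  | inl c => if c == x then 0 else 1
  | inr c => (cycle_dist k y c).+1
  end%N.
have y_to_x : walk (Sxy_rel x y) 1 (inr y) (inl x).
  by apply/existsP; exists (inl x); rewrite /Sxy_rel /= !eqxx ?orbT.
rewrite (@lin_cent_potential _ _ _ phi predT) //.
- rewrite big_sumType /= (sum_cycle_dist _ (fun d => a d.+1)).
  rewrite -(sum_ord_if_eq x).
  by congr (_ + _); apply: eq_bigr => c _; rewrite /phi; case: eqP.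
- move=> [c|c] [d|d]; rewrite /Sxy_rel /S_rel /phi /=.
  + by case: (c == x); case: (d == x).
  + by case: (c == x).
  + by case/andP => /eqP [->] _; rewrite cycle_dist_id.
  + by case/orP => [/eqP/(cycle_dist_arc y)|/andP [_ /eqP //]]; rewrite ltnS.
- by rewrite /phi eqxx.
- move=> [c|c] _; rewrite /phi.
    case: eqP => [->|/eqP ne] //=.
    by apply/existsP; exists (inl x); rewrite /Sxy_rel /= ne eqxx.
  rewrite -addn1; apply: walk_cat y_to_x.
  exact: sub_walk (@S_sub_Sxy k k x y) (walk_cycle_dist k y c).
- move=> [c|c] _ /=; rewrite card_sum !card_ord /phi.
    by case: eqP => _; move: (ltn_ord x) (ltn_ord c); lia.
  by move: (cycle_dist_lt y c); lia.
Qed.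

Lemma lin_cent_Sxy_cycle k (x y : 'I_k) : (2 <= k)%N ->
  lin_cent a (Sxy_rel x y) (inr y) = a 1 + a 2 *+ k.-1 + \sum_(d < k) a d.
Proof.
move=> k_ge2.
pose phi (u : 'I_k + 'I_k) :=
  match u with
  | inl c => if c == x then 1 else 2
  | inr c => cycle_dist k y c
  end%N.
have x_to_y : walk (Sxy_rel x y) 1 (inl x) (inr y).
  by apply/existsP; exists (inr y); rewrite /Sxy_rel /= !eqxx /=.
rewrite (@lin_cent_potential _ _ _ phi predT) //.
- rewrite big_sumType /= sum_cycle_dist -(sum_ord_if_eq x).
  by congr (_ + _); apply: eq_bigr => c _; rewrite /phi; case: eqP.
- move=> [c|c] [d|d]; rewrite /Sxy_rel /S_rel /phi /=.
  + by case: (c == x); case: (d == x).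
  + by rewrite orbF => /andP [/eqP [->] _]; rewrite eqxx.
  + by case/andP => /eqP [->] _; rewrite cycle_dist_id.
  + by case/orP => [/eqP/(cycle_dist_arc y)|/andP [_ /eqP //]].
- by rewrite /phi cycle_dist_id.
- move=> [c|c] _; rewrite /phi;
    last exact: sub_walk (@S_sub_Sxy k k x y) (walk_cycle_dist k y c).
  case: eqP => [->|/eqP ne] //.
  rewrite -[2%N]/(1 + 1)%N; apply: walk_cat x_to_y.
  by apply/existsP; exists (inl x); rewrite /Sxy_rel /= ne eqxx.
- move=> [c|c] _ /=; rewrite card_sum !card_ord /phi.
    by case: eqP => _; move: (ltn_ord x); lia.
  by move: (cycle_dist_lt y c); lia.
Qed.

End LinCentInstances.

Section CentralityAxioms.
Variables (R : realType) (a : nat -> R).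

Lemma lin_cent_Sxy_diff k (x y : 'I_k) : (2 <= k)%N ->
  lin_cent a (Sxy_rel x y) (inl x) - lin_cent a (Sxy_rel x y) (inr y) =
  (a 1 - a 2) *+ k.-1 + a k - a 1.
Proof.
move=> k_ge2; rewrite lin_cent_Sxy_clique lin_cent_Sxy_cycle //.
have shift : \sum_(d < k) a d = a 0 + \sum_(d < k) a d.+1 - a k.
  rewrite -(big_mkord xpredT a) -(big_mkord xpredT (fun d => a d.+1)).
  by rewrite -big_nat_recl // big_nat_recr //= addrK.
by rewrite shift mulrnBl; ring.
Qed.

Lemma density_axiom_lin_cent :
  (forall k, (3 <= k)%N -> a 1 < (a 1 - a 2) *+ k.-1 + a k) ->
  density_axiom (lin_cent a).
Proof.
move=> ineq k x y k_ge3.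
by rewrite -subr_gt0 lin_cent_Sxy_diff 1?ltnW // subr_gt0 ineq.
Qed.

Hypotheses (a0 : a 0 = 0) (a1 : a 1 = 1) (a_ge0 : forall i, 0 <= a i)
  (a_le1 : forall i, a i <= 1).

Lemma size_axiom_lin_cent :
  size_axiom (lin_cent a) <-> forall n : nat, exists p, n%:R < \sum_(i < p) a i.
Proof.
have clique k p (x : 'I_k) : lin_cent a (@S_rel k p) (inl x) = k.-1%:R.
  by rewrite lin_cent_S_clique a0 a1 add0r.
split => [[_ large_p] n | unbounded].
  have [p0 Hp] := large_p n.+1 isT; exists p0.+1.
  by have := Hp p0.+1 (leqnSn _) ord0 ord0; rewrite clique lin_cent_S_cycle.
split => [p _ | k _].
  exists p.+2 => k k_ge x y; rewrite clique lin_cent_S_cycle.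
  have sum_le : \sum_(i < p) a i <= p%:R.
    by rewrite -[in leRHS](card_ord p) -sumr_const; apply: ler_sum.
  by apply: le_lt_trans sum_le _; rewrite ltr_nat; lia.
have [p Hp] := unbounded k.-1; exists p => q le_pq x y.
rewrite clique lin_cent_S_cycle; apply: lt_le_trans Hp _.
rewrite -!(big_mkord xpredT a) (big_cat_nat (leq0n p) le_pq) /= lerDl.
exact: sumr_ge0.
Qed.

End CentralityAxioms.

Section Bernoulli.
Variables (R : realDomainType) (x : R).
Hypothesis x_ge : -1 <= x.

Lemma bernoulli n : 1 + x *+ n <= (1 + x) ^+ n.
Proof.
elim: n => [|n IH]; first by rewrite expr0 mulr0n addr0.
rewrite exprS; apply: le_trans (ler_wpM2l _ IH); last by rewrite -lerBlDl sub0r.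
rewrite -subr_ge0.
have -> : (1 + x) * (1 + x *+ n) - (1 + x *+ n.+1) = x ^+ 2 *+ n by ring.
by rewrite mulrn_wge0 ?sqr_ge0.
Qed.

Lemma bernoulli_strict n : x != 0 -> (1 < n)%N -> 1 + x *+ n < (1 + x) ^+ n.
Proof.
case: n => [|[|n]] // x_neq0 _.
rewrite exprS; apply: lt_le_trans (ler_wpM2l _ (bernoulli n.+1)); last first.
  by rewrite -lerBlDl sub0r.
rewrite -subr_gt0.
have -> : (1 + x) * (1 + x *+ n.+1) - (1 + x *+ n.+2) = x ^+ 2 *+ n.+1 by ring.
by rewrite pmulrn_lgt0 // exprn_even_gt0.
Qed.

End Bernoulli.

Section PowR.
Variable R : realType.

Lemma powR_expR (x r : R) : 0 < x -> x `^ r = expR (r * ln x).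
Proof. by move=> x_gt0; rewrite /powR gt_eqF. Qed.

Lemma ln_sub_ge (x y : R) : 0 < x -> 0 < y -> 1 - x / y <= ln y - ln x.
Proof.
move=> x_gt0 y_gt0.
have : ln (x / y) <= x / y - 1.
  have := @le_ln1Dx _ (x / y - 1); rewrite [1 + _]addrC subrK; apply.
  by have := divr_gt0 x_gt0 y_gt0; lra.
rewrite ln_div ?posrE //; lra.
Qed.

(* [(y / x) `^ t >= 1 + t * ln (y / x) >= 1 + t * (1 - x / y)]. *)
Lemma powRN_tangent (t x y : R) : 0 <= t -> 0 < x -> 0 < y ->
  y `^ (- t) * (1 + t * (1 - x / y)) <= x `^ (- t).
Proof.
move=> t_ge0 x_gt0 y_gt0; rewrite !powR_expR //.
have -> : - t * ln x = - t * ln y + t * (ln y - ln x) by ring.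
rewrite expRD ler_pM2l ?expR_gt0 //; apply: le_trans (expR_ge1Dx _).
by rewrite lerD2l ler_wpM2l // ln_sub_ge.
Qed.

End PowR.

Lemma apowS (R : realType) (gamma : R) n : apow gamma n.+1 = n.+1%:R `^ (- gamma).
Proof. by []. Qed.

Lemma apow1 (R : realType) (gamma : R) : apow gamma 1 = 1.
Proof. by rewrite apowS powR1. Qed.

Lemma apow_ge0 (R : realType) (gamma : R) n : 0 <= apow gamma n.
Proof. by case: n => [|n]; rewrite ?apowS ?powR_ge0. Qed.

Section Apow.
Variables (R : realType) (gamma : R).
Local Notation a := (apow gamma).

Lemma apow_le m n : 0 <= gamma -> (0 < m <= n)%N -> a n <= a m.
Proof.
case: m n => [|m] [|n] // gamma_ge0 /= le_mn.
rewrite !apowS !powR_expR ?ltr0n // ler_expR !mulNr lerN2.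
by rewrite ler_wpM2l // ler_ln ?posrE ?ltr0n // ler_nat.
Qed.

Lemma apow_le1 n : 0 <= gamma -> a n <= 1.
Proof.
by case: n => [|n] gamma_ge0; [exact: ler01 | rewrite -(apow1 gamma) apow_le].
Qed.

Lemma apow2_lt1 : 0 < gamma -> a 2 < 1.
Proof.
move=> gamma_gt0; rewrite apowS powR_expR // expR_lt1 mulNr oppr_lt0.
by rewrite mulr_gt0 // ln_gt0 // ltr1n.
Qed.

Lemma apow2X n : a 2 ^+ n = a (2 ^ n).
Proof.
have two_n : (2 ^ n = (2 ^ n).-1.+1)%N by rewrite prednK // expn_gt0.
rewrite two_n /apow /= -two_n !powR_expR ?ltr0n ?expn_gt0 //.
by rewrite -expRM_natl natrX lnXn // mulrnAr mulr_natl.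
Qed.

Lemma apow_density k : 0 < gamma -> (3 <= k)%N -> 1 < (1 - a 2) *+ k.-1 + a k.
Proof.
move=> gamma_gt0 k_ge3.
have k_le : a (2 ^ k.-1) <= a k.
  apply: apow_le; first exact: ltW.
  by have := @ltn_expl 2 k.-1 isT; lia.
have bern : 1 + (a 2 - 1) *+ k.-1 < a 2 ^+ k.-1.
  have := @bernoulli_strict _ (a 2 - 1); rewrite addrCA subrr addr0; apply.
  - by have := apow_ge0 gamma 2; lra.
  - by rewrite subr_eq0 lt_eqF // apow2_lt1.
  - by lia.
rewrite apow2X in bern; rewrite -opprB mulNrn; lra.
Qed.

Lemma apow_sum_unbounded : 0 <= gamma <= 1 ->
  forall n : nat, exists p, n%:R < \sum_(i < p) a i.
Proof.
move=> gamma01 n; apply: contrapT => /forallNP bounded.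
have gamma_ge0 : 0 <= gamma by case/andP: gamma01.
apply: (dvg_riemannR gamma01); apply: nondecreasing_is_cvgn.
  move=> m q le_mq; rewrite /series /= (big_cat_nat (leq0n m) le_mq) /= lerDl.
  by apply: sumr_ge0 => i _; exact/ltW/riemannR_gt0.
exists n%:R => _ [m _ <-]; rewrite leNgt; apply/negP => lt_n.
apply: (bounded m.+1); rewrite big_ord_recl add0r.
rewrite /series /= big_mkord in lt_n; congr (_ < _): lt_n.
by apply: eq_bigr => i _; rewrite lift0 apowS powRN.
Qed.

Lemma apow_telescope_step n : 1 <= gamma ->
  (gamma - 1) * a n.+2 <= apow (gamma - 1) n.+1 - apow (gamma - 1) n.+2.
Proof.
move=> gamma_ge1; rewrite lerBrDl !apowS.
have := @powRN_tangent _ (gamma - 1) n.+1%:R n.+2%:R.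
rewrite subr_ge0 !ltr0n; move/(_ gamma_ge1 isT isT); apply: le_trans.
have -> : 1 - n.+1%:R / n.+2%:R = n.+2%:R^-1 :> R.
  by rewrite -[n.+2%:R]natr1; field; rewrite nat1r natr1 pnatr_eq0.
have -> : n.+2%:R `^ (- gamma) = n.+2%:R `^ (- (gamma - 1)) * n.+2%:R^-1 :> R.
  by rewrite -powR_inv1 ?ler0n // -powRD ?pnatr_eq0 ?implybT //; congr powR; ring.
by rewrite mulrDr mulr1 lerD2l mulrCA.
Qed.

Lemma apow_sum_le p : 1 <= gamma -> (gamma - 1) * \sum_(i < p) a i <= gamma.
Proof.
move=> gamma_ge1; case: p => [|[|p]].
- by rewrite big_ord0 mulr0 (le_trans ler01).
- by rewrite big_ord1 /= mulr0 (le_trans ler01).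
rewrite -(big_mkord xpredT a) !big_nat_recl //= add0r apow1.
suff : (gamma - 1) * \sum_(0 <= i < p) a i.+2 <= 1 by lra.
rewrite mulr_sumr.
apply: le_trans (ler_sum _ (fun i _ => apow_telescope_step i gamma_ge1)) _.
rewrite (@telescope_sumr_eq _ _ _ (fun i => - apow (gamma - 1) i.+1)) //.
  by rewrite opprK apow1 addrC lerBlDr lerDl apow_ge0.
by move=> i _; rewrite opprK addrC.
Qed.

Lemma apow_sum_unbounded_iff : 0 <= gamma ->
  (forall n : nat, exists p, n%:R < \sum_(i < p) a i) <-> gamma <= 1.
Proof.
move=> gamma_ge0; split => [unbounded | gamma_le1];
  last exact/apow_sum_unbounded/andP.
rewrite leNgt; apply/negP => gamma_gt1.
have t_gt0 : 0 < gamma - 1 by rewrite subr_gt0.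
have [p] := unbounded (Num.Def.archi_bound (gamma / (gamma - 1))).
have := archi_boundP (divr_ge0 gamma_ge0 (ltW t_gt0)).
rewrite ltr_pdivrMr // => lt_bound lt_sum.
have := apow_sum_le p (ltW gamma_gt1).
by rewrite leNgt mulrC (lt_trans lt_bound) // ltr_pM2r.
Qed.

End Apow.

Theorem corollary1 (R : realType) (gamma : R) (hgamma : 0 < gamma) :
  density_axiom (lin_cent (apow gamma)) /\
  (size_axiom (lin_cent (apow gamma)) <-> gamma <= 1).
Proof.
have gamma_ge0 := ltW hgamma.
split.
  apply: density_axiom_lin_cent => k k_ge3.
  by rewrite apow1; exact: apow_density.
rewrite size_axiom_lin_cent; first exact: apow_sum_unbounded_iff.
- by [].
- exact: apow1.
- exact: apow_ge0.
- by move=> i; exact: apow_le1.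
Qed.
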